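(* In the setting described in the context, let $(x^k)$, $(\bar x^k)$, $(\alpha_k)$ be the sequences generated by the Conceptual Algorithm (with either Method 1 or Method 2). Then for all $k$, $\alpha_k\le\alpha_{-1}$ and $$\Big\langle\frac{x^k-\bar x^k}{\alpha_k}-(A_2x^k-A_2\bar x^k),\,x^k-\bar x^k\Big\rangle\ge\frac{1-\delta}{\alpha_k}\|x^k-\bar x^k\|^2\ge0.$$
   Context: Let $\mathcal H$ be a real Hilbert space with inner product $\langle\cdot,\cdot\rangle$ and norm $\|\cdot\|$. Let $A_1:\mathcal H\to\mathcal H$ be $\beta$-cocoercive for some $\beta>0$ (i.e. $\langle A_1x-A_1y,x-y\rangle\ge\beta\|A_1x-A_1y\|^2$ for all $x,y$), let $A_2:\mathcal H\to\mathcal H$ be maximally monotone and uniformly continuous, let $B:\mathcal H\rightrightarrows\mathcal H$ be maximally monotone, and set $A:=A_1+A_2$. Assume $\operatorname{zer}(A+B):=\{x:0\in Ax+Bx\}\neq\emptyset$. $J_{\alpha B}:=(I+\alpha B)^{-1}$ for $\alpha>0$, and $P_C$ denotes the orthogonal projection onto a nonempty closed convex set $C$. Fix $\theta,\delta\in(0,1)$, $\bar\delta>0$ with $1-\delta-\bar\delta>0$, and $\alpha_{-1}>0$ with $\alpha_{-1}\le4\beta\bar\delta$. Conceptual Algorithm: pick $x^0\in\mathcal H$. Given $x^k$ and $\alpha_{k-1}$, for $j\in\mathbb N$ let $\bar x^k_j:=J_{\alpha_{k-1}\theta^jB}(x^k-\alpha_{k-1}\theta^jAx^k)$ and let $j(k)$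 be the smallest $j\in\mathbb N$ with $\alpha_{k-1}\theta^j\langle A_2x^k-A_2\bar x^k_j,x^k-\bar x^k_j\rangle\le\delta\|x^k-\bar x^k_j\|^2$. Set $\alpha_k:=\alpha_{k-1}\theta^{j(k)}$, $\bar x^k:=J_{\alpha_kB}(x^k-\alpha_kAx^k)$, $r_k:=\frac{\bar\delta}{\alpha_k}\|x^k-\bar x^k\|^2$, $T_k:=\{x\in\mathcal H:\langle \frac{x^k-\bar x^k}{\alpha_k}-(A_2x^k-A_2\bar x^k),x-\bar x^k\rangle\le r_k\}$ and $\Gamma_k:=\{x\in\mathcal H:\langle x^0-x^k,x-x^k\rangle\le0\}$. Method 1 sets $x^{k+1}:=P_{T_k}(x^k)$; Method 2 sets $x^{k+1}:=P_{T_k\cap\Gamma_k}(x^0)$. The algorithm stops if $x^{k+1}=x^k$. *)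

From mathcomp Require Import all_boot all_order all_algebra.
From mathcomp Require Import reals.
Set Implicit Arguments. Unset Strict Implicit. Unset Printing Implicit Defensive.
Import Order.TTheory GRing.Theory Num.Theory.
Local Open Scope ring_scope.

Section Hilbert.
Variables (R : realType) (V : lmodType R) (ip : V -> V -> R).

Definition hnorm (x : V) : R := Num.sqrt (ip x x).

Record is_hilbert : Prop := IsHilbert {
  ip_sym : forall x y, ip x y = ip y x;
  ip_linl : forall (a : R) x y z, ip (a *: x + y) z = a * ip x z + ip y z;
  ip_ge0 : forall x, 0 <= ip x x;
  ip_eq0 : forall x, ip x x = 0 -> x = 0;
  ip_complete : forall u : nat -> V,
    (forall e : R, 0 < e -> exists N : nat, forall m n : nat,
        (N <= m)%N -> (N <= n)%N -> hnorm (u m - u n) < e) ->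
    exists l : V, forall e : R, 0 < e -> exists N : nat, forall n : nat,
        (N <= n)%N -> hnorm (u n - l) < e
}.

(* set-valued operators are represented by their graphs: B x u <-> u \in B x *)
Definition monotone_op (B : V -> V -> Prop) : Prop :=
  forall x u y v, B x u -> B y v -> 0 <= ip (x - y) (u - v).

Definition maximally_monotone (B : V -> V -> Prop) : Prop :=
  monotone_op B /\
  forall x u, (forall y v, B y v -> 0 <= ip (x - y) (u - v)) -> B x u.

Definition graph_of (A : V -> V) : V -> V -> Prop := fun x u => u = A x.

Definition cocoercive (beta : R) (A : V -> V) : Prop :=
  forall x y, beta * hnorm (A x - A y) ^+ 2 <= ip (A x - A y) (x - y).

Definition uniformly_continuous_op (A : V -> V) : Prop :=
  forall e : R, 0 < e -> exists d : R, 0 < d /\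
    forall x y, hnorm (x - y) < d -> hnorm (A x - A y) < e.

(* p = J_{aB}(z) = (I + aB)^{-1} z  <->  z \in p + a B p *)
Definition is_resolvent (B : V -> V -> Prop) (a : R) (z p : V) : Prop :=
  B p (a^-1 *: (z - p)).

Definition is_proj (C : V -> Prop) (z p : V) : Prop :=
  C p /\ forall y, C y -> hnorm (z - p) <= hnorm (z - y).

End Hilbert.

From mathcomp Require Import all_boot all_order all_algebra.
From mathcomp Require Import reals.
From mathcomp Require Import ring lra.
Import Order.TTheory GRing.Theory Num.Theory.
Local Open Scope ring_scope.

(* The step sizes only ever shrink, by factors theta^j <= 1, so they stay in
   (0, alpha_{-1}].  The accepted line-search step alpha_k, tested at the trial
   point xbar^k itself, gives alpha_k <A2 x^k - A2 xbar^k, x^k - xbar^k> <=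
   delta ||x^k - xbar^k||^2, and subtracting this from ||x^k - xbar^k||^2 / alpha_k
   yields the bound.  Neither the projection step (hence the choice of method)
   nor the properties of A1, A2 and B play any role. *)

Lemma backtracking_steps_bounds {R : realFieldType} {alpha : nat -> R}
    {alpha_m1 theta : R} {j : nat -> nat} :
  0 < alpha_m1 -> 0 < theta -> theta <= 1 ->
  (forall k, alpha k = (if k is k'.+1 then alpha k' else alpha_m1) * theta ^+ j k) ->
  forall k, 0 < alpha k <= alpha_m1.
Proof.
move=> a0 th0 th1 Halpha.
have theta_pow n : 0 < theta ^+ n <= 1.
  by rewrite exprn_gt0 //= exprn_ile1 // ltW.
elim=> [|k IH]; rewrite Halpha /=.
  by have /andP[t0 t1] := theta_pow (j 0%N); apply/andP; split; nra.
have /andP[ak0 ak1] := IH; have /andP[t0 t1] := theta_pow (j k.+1).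
by apply/andP; split; nra.
Qed.

Section InnerProduct.
Variables (R : realType) (V : lmodType R) (ip : V -> V -> R).
Hypothesis Hip : is_hilbert ip.

Lemma ip0l z : ip 0 z = 0.
Proof. by have := ip_linl Hip 1 0 0 z; rewrite scale1r addr0 mul1r; lra. Qed.

Lemma ipBl (a : R) u w z : ip (a *: u - w) z = a * ip u z - ip w z.
Proof.
rewrite ip_linl //; congr (_ + _).
by have := ip_linl Hip (-1) w 0 z; rewrite addr0 scaleN1r ip0l addr0; lra.
Qed.

Lemma hnorm_sqr u : hnorm ip u ^+ 2 = ip u u.
Proof. by rewrite /hnorm sqr_sqrtr // ip_ge0. Qed.

Lemma ip_scaled_sub_ge (a delta : R) (d g : V) :
  0 < a -> a * ip g d <= delta * hnorm ip d ^+ 2 ->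
  (1 - delta) / a * hnorm ip d ^+ 2 <= ip (a^-1 *: d - g) d.
Proof.
move=> a0; rewrite ipBl hnorm_sqr => Hg.
have ia0 : 0 < a^-1 by rewrite invr_gt0.
have aia : a * a^-1 = 1 by rewrite mulfV // gt_eqF.
have Hg_scaled : ip g d <= a^-1 * (delta * ip d d).
  by rewrite -[ip g d]mul1r -aia (mulrC a) -mulrA ler_pM2l.
have -> : (1 - delta) / a * ip d d = a^-1 * ip d d - a^-1 * (delta * ip d d)
  by ring.
lra.
Qed.

End InnerProduct.

Theorem proposition4p4
  (R : realType) (V : lmodType R) (ip : V -> V -> R)
  (A1 A2 : V -> V) (B : V -> V -> Prop)
  (beta theta delta deltab alpha_m1 : R)
  (method2 : bool)
  (x xbar : nat -> V) (alpha : nat -> R) (j : nat -> nat) :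
  is_hilbert ip ->
  0 < beta -> cocoercive ip beta A1 ->
  maximally_monotone ip (graph_of A2) -> uniformly_continuous_op ip A2 ->
  maximally_monotone ip B ->
  (exists z, B z (- (A1 z + A2 z))) ->
  0 < theta < 1 -> 0 < delta < 1 -> 0 < deltab -> 0 < 1 - delta - deltab ->
  0 < alpha_m1 -> alpha_m1 <= 4 * beta * deltab ->
  let A := fun v => A1 v + A2 v in
  let alpha_prev := fun k : nat => if k is k'.+1 then alpha k' else alpha_m1 in
  (* linesearch condition for trial step s = alpha_{k-1} theta^jj at x^k,
     with trial point  xbar^k_jj = J_{sB}(x^k - s A x^k) *)
  let ls_cond := fun (k jj : nat) =>
    let s := alpha_prev k * theta ^+ jj in
    forall p, is_resolvent B s (x k - s *: A (x k)) p ->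
      s * ip (A2 (x k) - A2 p) (x k - p) <= delta * hnorm ip (x k - p) ^+ 2 in
  (forall k, ls_cond k (j k) /\ forall jj, (jj < j k)%N -> ~ ls_cond k jj) ->
  (forall k, alpha k = alpha_prev k * theta ^+ j k) ->
  (forall k, is_resolvent B (alpha k) (x k - alpha k *: A (x k)) (xbar k)) ->
  let T := fun (k : nat) (v : V) =>
    ip ((alpha k)^-1 *: (x k - xbar k) - (A2 (x k) - A2 (xbar k))) (v - xbar k)
      <= deltab / alpha k * hnorm ip (x k - xbar k) ^+ 2 in
  let Gamma := fun (k : nat) (v : V) => ip (x 0%N - x k) (v - x k) <= 0 in
  (forall k, if method2
             then is_proj ip (fun v => T k v /\ Gamma k v) (x 0%N) (x k.+1)
             else is_proj ip (T k) (x k) (x k.+1)) ->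
  forall k,
    alpha k <= alpha_m1 /\
    (1 - delta) / alpha k * hnorm ip (x k - xbar k) ^+ 2
      <= ip ((alpha k)^-1 *: (x k - xbar k) - (A2 (x k) - A2 (xbar k)))
            (x k - xbar k) /\
    0 <= (1 - delta) / alpha k * hnorm ip (x k - xbar k) ^+ 2.
Proof.
move=> Hip _ _ _ _ _ _ /andP[th0 th1] /andP[_ d1] _ _ a0 _ A alpha_prev ls_cond
  Hls Halpha Hres T Gamma _ k.
have /andP[ak0 ak1] := backtracking_steps_bounds a0 th0 (ltW th1) Halpha k.
have accepted : alpha k * ip (A2 (x k) - A2 (xbar k)) (x k - xbar k)
                <= delta * hnorm ip (x k - xbar k) ^+ 2.
  by have := (Hls k).1 (xbar k); rewrite /= -Halpha; apply; exact: Hres.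
split=> //; split; first exact: ip_scaled_sub_ge.
by rewrite mulr_ge0 ?divr_ge0 ?sqr_ge0 ?subr_ge0 ?ltW.
Qed.
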